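(* Let $f$ be as in the setting below and satisfy condition (i), and let $0<s\le 1$. Then for every set $A\subset[0,1)$, \[ M^s_\infty(A)\ge \frac{1}{2g_fK_f}N^s_\infty(A). \]
   Context: Setting: $f\colon[0,1)\to[0,1)$ and $g_f\ge 2$ is an integer such that $[0,1)$ is partitioned into $g_f$ half-open intervals $[a,b)$, enumerated as $[0],\dots,[g_f-1]$, such that on each of them $f$ is monotone and maps onto $[0,1)$, and $|f(x)-f(y)|\ge |x-y|$ for all $x,y$ in the same interval. For a word $x_1\dots x_n$ over $\{0,\dots,g_f-1\}$ the generation-$n$ cylinder is $C_{x_1\dots x_n}=\{x\in[0,1): f^{i-1}(x)\in[x_i],\ i=1,\dots,n\}$; $[0,1)$ is the generation-$0$ cylinder. It is assumed that $|C_{x_1\dots x_n}|\to 0$ as $n\to\infty$ for every $(x_i)\in\{0,\dots,g_f-1\}^{\mathbb N}$. Condition (i) (bounded distortion): there is $K_f>0$ such that for every cylinder $C_{x_1\dots x_n}$ (including $[0,1)$), $|(f^n)'(y)|/|(f^n)'(z)|<K_f$ for all $y,z\in C_{x_1\dots x_n}$; this implies $|C_{x_1\dots x_{n+1}}|/|C_{x_1\dots x_n}|>1/(g_fK_f)$ for all sequences and all $n$. Outer measures: $M^s_\infty(F)=\inf\{\sum_i|I_i|^s: F\subset\bigcup_i I_i\}$, the infimum over countable covers by dyadic intervals $I_i=[2^kj,2^k(j+1))$, $k,j\in\mathbb Z$; $N^s_\infty(F)=\inf\{\sum_i |C_i|^s: F\subset\bigcup_i C_i\}$, the infimum over countable covers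 by cylinders of $f$. *)

From Stdlib Require Import Reals Lra List ZArith Classical ClassicalEpsilon.
Open Scope R_scope.

(* Supremum of a set of reals (0 if empty or unbounded above). *)
Definition Rsup (E : R -> Prop) : R :=
  match excluded_middle_informative (bound E /\ exists x, E x) with
  | left H => proj1_sig (completeness E (proj1 H) (proj2 H))
  | right _ => 0
  end.

(* Infimum of a set of reals (0 if empty or unbounded below). *)
Definition Rinf (E : R -> Prop) : R := - Rsup (fun x => E (- x)).

Definition diam (S : R -> Prop) : R :=
  Rsup (fun r => exists x y, S x /\ S y /\ r = Rabs (x - y)).

(* x^s for x > 0, and 0 for x <= 0 (only used with x >= 0). *)
Definition pw (x s : R) : R :=
  if Rlt_dec 0 x then Rpower x s else 0.

Definition branch (a : nat -> R) (k : nat) (x : R) : Prop :=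
  a k <= x < a (S k).

Definition word_ok (g : nat) (w : list nat) : Prop :=
  forall i, In i w -> (i < g)%nat.

(* Cylinder C_{x_1...x_n}: f^{i-1}(x) in [x_i] for i = 1..n. *)
Definition cyl (f : R -> R) (a : nat -> R) (w : list nat) (x : R) : Prop :=
  0 <= x < 1 /\
  forall i, (i < length w)%nat -> branch a (nth i w 0%nat) (Nat.iter i f x).

(* (f^n)'(y) computed by the chain rule from the derivative df of f. *)
Fixpoint dfn (f df : R -> R) (n : nat) (y : R) : R :=
  match n with
  | O => 1
  | S m => dfn f df m y * df (Nat.iter m f y)
  end.

Definition setting (f : R -> R) (g : nat) (a : nat -> R) : Prop :=
  (2 <= g)%nat /\
  a 0%nat = 0 /\ a g = 1 /\
  (forall k, (k < g)%nat -> a k < a (S k)) /\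
  (forall k, (k < g)%nat ->
     (forall x y, branch a k x -> branch a k y -> x <= y -> f x <= f y) \/
     (forall x y, branch a k x -> branch a k y -> x <= y -> f y <= f x)) /\
  (forall k, (k < g)%nat ->
     (forall x, branch a k x -> 0 <= f x < 1) /\
     (forall y, 0 <= y < 1 -> exists x, branch a k x /\ f x = y)) /\
  (forall k, (k < g)%nat -> forall x y, branch a k x -> branch a k y ->
     Rabs (f x - f y) >= Rabs (x - y)) /\
  (forall xs : nat -> nat, (forall i, (xs i < g)%nat) ->
     Un_cv (fun n => diam (cyl f a (map xs (seq 0 n)))) 0).

(* Condition (i) with constant K, df being the derivative of f inside the
   branches, together with its stated consequence on cylinder ratios. *)
Definition condition_i (f df : R -> R) (g : nat) (a : nat -> R) (K : R) : Prop :=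
  0 < K /\
  (forall k, (k < g)%nat -> forall x, a k < x < a (S k) ->
     derivable_pt_lim f x (df x)) /\
  (forall w, word_ok g w -> forall y z, cyl f a w y -> cyl f a w z ->
     Rabs (dfn f df (length w) y) / Rabs (dfn f df (length w) z) < K) /\
  (forall w, word_ok g w -> forall k, (k < g)%nat ->
     diam (cyl f a (w ++ k :: nil)) / diam (cyl f a w) > 1 / (INR g * K)).

Definition dyad (kj : Z * Z) (x : R) : Prop :=
  powerRZ 2 (fst kj) * IZR (snd kj) <= x < powerRZ 2 (fst kj) * (IZR (snd kj) + 1).

(* M^s_infty: countable (possibly finite: None = no interval) dyadic covers. *)
Definition Mout (s : R) (A : R -> Prop) : R :=
  Rinf (fun r => exists I : nat -> option (Z * Z),
    (forall x, A x -> exists i kj, I i = Some kj /\ dyad kj x) /\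
    infinite_sum (fun i => match I i with
                           | Some kj => pw (powerRZ 2 (fst kj)) s
                           | None => 0 end) r).

(* N^s_infty: countable (possibly finite) covers by cylinders of f. *)
Definition Nout (f : R -> R) (g : nat) (a : nat -> R) (s : R) (A : R -> Prop) : R :=
  Rinf (fun r => exists C : nat -> option (list nat),
    (forall w i, C i = Some w -> word_ok g w) /\
    (forall x, A x -> exists i w, C i = Some w /\ cyl f a w x) /\
    infinite_sum (fun i => match C i with
                           | Some w => pw (diam (cyl f a w)) s
                           | None => 0 end) r).

From Stdlib Require Import Reals Lra Lia List ZArith Classical ClassicalEpsilon Wf_nat.
Open Scope R_scope.

(* Stop the cylinders of each point x at the first generation where their diameter drops
   below g K L. These stopping cylinders partition [0,1), and by the ratio bound of condition (i)
   each is longer than L (unless it is all of [0,1)). In an interval of length L, every point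
   outside the stopping cylinder of its leftmost point has a stopping cylinder lying to the right
   of that point and reaching past the interval, so the interval is covered by two stopping
   cylinders, each of s-weight at most (g K L)^s <= g K L^s. Replacing every dyadic interval of a
   cover by two such cylinders gives N^s(A) <= 2 g K M^s(A). *)


Lemma Rsup_lub (E : R -> Prop) : bound E -> (exists x, E x) -> is_lub E (Rsup E).
Proof.
  intros Hb Hne. unfold Rsup.
  destruct excluded_middle_informative as [H|H]; [|tauto].
  exact (proj2_sig (completeness E (proj1 H) (proj2 H))).
Qed.

Lemma Rsup_gt_mem (E : R -> Prop) L : 0 <= L -> L < Rsup E -> exists r, E r /\ L < r.
Proof.
  intros HL HLt. apply NNPP; intro Hno.
  assert (Hub : forall r, E r -> r <= L).
  { intros r Hr. apply Rnot_lt_le. intro. apply Hno. eauto. }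
  revert HLt. unfold Rsup. destruct excluded_middle_informative as [H|H]; [|lra].
  destruct (completeness E (proj1 H) (proj2 H)) as [sup Hsup]. simpl. destruct Hsup as [_ Hleast].
  specialize (Hleast L Hub). lra.
Qed.

Lemma Rinf_glb (E : R -> Prop) r0 : (forall r, E r -> 0 <= r) -> E r0 ->
  is_lub (fun x => E (- x)) (- Rinf E).
Proof.
  intros Hnn Hr0. unfold Rinf. rewrite Ropp_involutive. apply Rsup_lub.
  - exists 0. intros x Hx. specialize (Hnn _ Hx). lra.
  - exists (- r0). rewrite Ropp_involutive. exact Hr0.
Qed.

Lemma Rinf_le_mem (E : R -> Prop) r : (forall r, E r -> 0 <= r) -> E r -> Rinf E <= r.
Proof.
  intros Hnn Hr. enough (- r <= - Rinf E) by lra.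
  apply (proj1 (Rinf_glb E r Hnn Hr)). rewrite Ropp_involutive. exact Hr.
Qed.

Lemma Rinf_ge_lb (E : R -> Prop) r0 b : (forall r, E r -> 0 <= r) -> E r0 ->
  (forall r, E r -> b <= r) -> b <= Rinf E.
Proof.
  intros Hnn Hr0 Hb. enough (- Rinf E <= - b) by lra.
  apply (proj2 (Rinf_glb E r0 Hnn Hr0)). intros x Hx. specialize (Hb _ Hx). lra.
Qed.

Lemma diam_gt_above (S : R -> Prop) b L : 0 <= L -> L < diam S ->
  (forall t, S t -> b <= t) -> exists t, S t /\ b + L < t.
Proof.
  intros HL Hd Hb.
  destruct (Rsup_gt_mem _ L HL Hd) as [r [[u [v [Su [Sv ->]]]] Hr]].
  pose proof (Hb u Su). pose proof (Hb v Sv).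
  destruct (Rle_dec u v).
  - exists v. rewrite Rabs_left1 in Hr by lra. split; [exact Sv | lra].
  - exists u. rewrite Rabs_right in Hr by lra. split; [exact Su | lra].
Qed.

Lemma sum_pairs u n : sum_f_R0 u (S (2 * n)) = sum_f_R0 (fun i => u (2 * i)%nat + u (S (2 * i))) n.
Proof.
  induction n as [|n IH]; [simpl; lra|].
  replace (S (2 * S n)) with (S (S (S (2 * n)))) by lia.
  rewrite 2!tech5, IH, tech5. replace (2 * S n)%nat with (S (S (2 * n))) by lia. lra.
Qed.

Lemma infinite_sum_pairs_le (u m : nat -> R) B r :
  (forall j, 0 <= u j) -> (forall i, 0 <= m i) -> 0 <= B ->
  (forall i, u (2 * i)%nat + u (S (2 * i)) <= B * m i) ->
  infinite_sum m r -> exists r', infinite_sum u r' /\ r' <= B * r.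
Proof.
  intros Hu Hm HB Hpair Hsum.
  assert (Hgrow : Un_growing (sum_f_R0 u)) by (intro n; simpl; specialize (Hu (S n)); lra).
  assert (Hbound : forall n, sum_f_R0 u n <= B * r).
  { intro n. apply Rle_trans with (sum_f_R0 u (S (2 * n))); [apply tech9; auto; lia|].
    rewrite sum_pairs. apply Rle_trans with (B * sum_f_R0 m n).
    - rewrite scal_sum. apply sum_Rle. intros i _. rewrite Rmult_comm. apply Hpair.
    - apply Rmult_le_compat_l; [exact HB|]. apply sum_incr; assumption. }
  destruct (growing_cv _ Hgrow) as [r' Hr']; [exists (B * r); intros x [n ->]; apply Hbound|].
  exists r'. split; [exact Hr'|].
  apply Rnot_lt_le. intro Hlt.
  destruct (Hr' (r' - B * r) ltac:(lra)) as [N HN]. specialize (HN N (le_n N)).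
  specialize (Hbound N). unfold Rdist in HN. rewrite Rabs_left1 in HN by lra. lra.
Qed.

Lemma infinite_sum_ge0 (u : nat -> R) r : (forall n, 0 <= u n) -> infinite_sum u r -> 0 <= r.
Proof.
  intros Hu Hr. apply Rle_trans with (sum_f_R0 u 0); [apply Hu | apply sum_incr; assumption].
Qed.

Lemma infinite_sum_first (u : nat -> R) : (forall n, u (S n) = 0) -> infinite_sum u (u 0%nat).
Proof.
  intros Hu eps Heps. exists 0%nat. intros n _.
  replace (sum_f_R0 u n) with (u 0%nat).
  - unfold Rdist. rewrite Rminus_diag, Rabs_R0. exact Heps.
  - induction n as [|n IH]; simpl; [reflexivity|]. rewrite Hu, <- IH. lra.
Qed.

Lemma pw_nonneg x s : 0 <= pw x s.
Proof. unfold pw. destruct Rlt_dec; [left; apply exp_pos | lra]. Qed.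

Lemma pw_le x y s : 0 <= s -> x <= y -> pw x s <= pw y s.
Proof.
  intros Hs Hxy. unfold pw at 1. destruct Rlt_dec as [Hx|Hx]; [|apply pw_nonneg].
  unfold pw. destruct Rlt_dec; [apply Rle_Rpower_l; lra | lra].
Qed.

Lemma pw_scale_le c L s : 1 <= c -> 0 < L -> 0 < s <= 1 -> pw (c * L) s <= c * pw L s.
Proof.
  intros Hc HL Hs. unfold pw.
  destruct Rlt_dec as [H1|H1]; [|nra]. destruct Rlt_dec as [H2|H2]; [|lra].
  rewrite <- Rpower_mult_distr by lra.
  apply Rmult_le_compat_r; [left; apply exp_pos|].
  rewrite <- (Rpower_1 c) at 2 by lra. apply Rle_Rpower; lra.
Qed.

Section Cylinders.

Variables (f : R -> R) (g : nat) (a : nat -> R).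
Hypothesis Hset : setting f g a.

Lemma partition_le i j : (i <= j)%nat -> (j <= g)%nat -> a i <= a j.
Proof.
  destruct Hset as (_ & _ & _ & Ha & _).
  intros Hij; induction Hij as [|j Hij IH]; intros Hj; [lra|].
  specialize (Ha j ltac:(lia)). specialize (IH ltac:(lia)). lra.
Qed.

Lemma branch_unit k x : (k < g)%nat -> branch a k x -> 0 <= x < 1.
Proof.
  destruct Hset as (_ & a0 & ag & _).
  intros Hk Hx. pose proof (partition_le 0 k ltac:(lia) ltac:(lia)).
  pose proof (partition_le (S k) g ltac:(lia) ltac:(lia)). unfold branch in Hx. lra.
Qed.

Lemma branch_unique k1 k2 x :
  (k1 < g)%nat -> (k2 < g)%nat -> branch a k1 x -> branch a k2 x -> k1 = k2.
Proof.
  unfold branch; intros H1 H2 B1 B2.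
  destruct (Nat.lt_trichotomy k1 k2) as [Hl|[He|Hl]]; [exfalso| exact He |exfalso].
  - pose proof (partition_le (S k1) k2 ltac:(lia) ltac:(lia)). lra.
  - pose proof (partition_le (S k2) k1 ltac:(lia) ltac:(lia)). lra.
Qed.

Lemma branch_exists x : 0 <= x < 1 -> exists k, (k < g)%nat /\ branch a k x.
Proof.
  destruct Hset as (_ & a0 & ag & _).
  intros Hx.
  assert (Hn : forall n, (n <= g)%nat -> x < a n -> exists k, (k < n)%nat /\ branch a k x).
  { induction n as [|n IH]; intros Hn Hxn; [lra|].
    destruct (Rlt_le_dec x (a n)) as [Hlt|Hge].
    - destruct (IH ltac:(lia) Hlt) as [k [Hk Hb]]. exists k. split; [lia | exact Hb].
    - exists n. split; [lia|]. unfold branch; lra. }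
  destruct (Hn g (le_n g) ltac:(lra)) as [k Hk]. eauto.
Qed.

Lemma iter_unit x : 0 <= x < 1 -> forall i, 0 <= Nat.iter i f x < 1.
Proof.
  destruct Hset as (_ & _ & _ & _ & _ & Honto & _).
  intros Hx i; induction i as [|i IH]; [exact Hx|].
  destruct (branch_exists _ IH) as [k [Hk Hb]].
  exact (proj1 (Honto k Hk) _ Hb).
Qed.

Lemma cyl_cons k w x : (k < g)%nat ->
  cyl f a (k :: w) x <-> branch a k x /\ cyl f a w (f x).
Proof.
  destruct Hset as (_ & _ & _ & _ & _ & Honto & _).
  intros Hk. split.
  - intros [_ Hc]. pose proof (Hc 0%nat ltac:(simpl; lia)) as Hb.
    split; [exact Hb|]. split; [exact (proj1 (Honto k Hk) _ Hb)|].
    intros i Hi. specialize (Hc (S i) ltac:(simpl; lia)).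
    rewrite Nat.iter_succ_r in Hc. exact Hc.
  - intros [Hb [_ Hc]]. split; [exact (branch_unit k x Hk Hb)|].
    intros [|i] Hi; [exact Hb|].
    simpl nth. rewrite Nat.iter_succ_r. apply Hc. simpl in Hi; lia.
Qed.

Lemma cyl_convex w x y z : word_ok g w -> cyl f a w x -> cyl f a w z ->
  x <= y <= z -> cyl f a w y.
Proof.
  destruct Hset as (_ & _ & _ & _ & Hmon & _).
  revert x y z; induction w as [|k w IH]; intros x y z Hw Cx Cz Hy.
  - split; [destruct Cx, Cz; lra | simpl; intros; lia].
  - assert (Hk : (k < g)%nat) by (apply Hw; left; reflexivity).
    assert (Hw' : word_ok g w) by (intros i Hi; apply Hw; right; exact Hi).
    apply cyl_cons in Cx as [Bx Cx]; [|exact Hk]. apply cyl_cons in Cz as [Bz Cz]; [|exact Hk].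
    assert (By : branch a k y) by (unfold branch in *; lra).
    apply cyl_cons; [exact Hk|]. split; [exact By|].
    destruct (Hmon k Hk) as [M|M].
    + apply (IH (f x) (f y) (f z)); auto. split; apply M; auto; lra.
    + apply (IH (f z) (f y) (f x)); auto. split; apply M; auto; lra.
Qed.

Definition digit (x : R) (i : nat) : nat :=
  epsilon (inhabits 0%nat) (fun k => (k < g)%nat /\ branch a k (Nat.iter i f x)).

Definition address (n : nat) (x : R) : list nat := map (digit x) (seq 0 n).

Lemma digit_spec x i : 0 <= x < 1 ->
  (digit x i < g)%nat /\ branch a (digit x i) (Nat.iter i f x).
Proof.
  intros Hx. unfold digit. apply epsilon_spec, branch_exists, iter_unit, Hx.
Qed.

Lemma nth_address n x i : (i < n)%nat -> nth i (address n x) 0%nat = digit x i.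
Proof.
  intros Hi. unfold address.
  rewrite nth_indep with (d' := digit x 0%nat) by (rewrite length_map, length_seq; exact Hi).
  rewrite map_nth, seq_nth by exact Hi. reflexivity.
Qed.

Lemma address_ok n x : 0 <= x < 1 -> word_ok g (address n x).
Proof.
  intros Hx k Hk. unfold address in Hk. apply in_map_iff in Hk as [i [<- _]].
  apply (digit_spec x i Hx).
Qed.

Lemma cyl_address n x : 0 <= x < 1 -> cyl f a (address n x) x.
Proof.
  intros Hx. split; [exact Hx|]. intros i Hi.
  unfold address in Hi. rewrite length_map, length_seq in Hi.
  rewrite nth_address by exact Hi. apply (digit_spec x i Hx).
Qed.

Lemma address_eq_of_cyl n m x z : 0 <= x < 1 -> (m <= n)%nat ->
  cyl f a (address n x) z -> address m z = address m x.
Proof.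
  intros Hx Hmn [Hz Cz]. apply map_ext_in. intros i Hi. apply in_seq in Hi.
  assert (Hin : (i < n)%nat) by lia.
  specialize (Cz i ltac:(unfold address; rewrite length_map, length_seq; exact Hin)).
  rewrite nth_address in Cz by exact Hin.
  destruct (digit_spec z i Hz) as [Hzg Hzb]. destruct (digit_spec x i Hx) as [Hxg _].
  exact (branch_unique _ _ _ Hzg Hxg Hzb Cz).
Qed.

Lemma address_S n x : address (S n) x = address n x ++ digit x n :: nil.
Proof. unfold address. rewrite seq_S, map_app. reflexivity. Qed.

Definition stop_gen (c x : R) : nat :=
  epsilon (inhabits 0%nat) (fun n => diam (cyl f a (address n x)) < c /\
    forall m, diam (cyl f a (address m x)) < c -> (n <= m)%nat).

Definition stop_word (c x : R) : list nat := address (stop_gen c x) x.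

Lemma stop_gen_spec c x : 0 < c -> 0 <= x < 1 ->
  diam (cyl f a (stop_word c x)) < c /\
  forall m, diam (cyl f a (address m x)) < c -> (stop_gen c x <= m)%nat.
Proof.
  destruct Hset as (_ & _ & _ & _ & _ & _ & _ & Hshrink).
  intros Hc Hx. unfold stop_word, stop_gen. apply epsilon_spec.
  destruct (Hshrink (digit x) (fun i => proj1 (digit_spec x i Hx)) c Hc) as [N HN].
  specialize (HN N (le_n N)). unfold R_dist in HN. rewrite Rminus_0_r in HN.
  pose proof (Rle_abs (diam (cyl f a (address N x)))).
  destruct (dec_inh_nat_subset_has_unique_least_element
              (fun n => diam (cyl f a (address n x)) < c)) as [n [Hn _]].
  - intro n. apply classic.
  - exists N. unfold address in *. lra.
  - exists n. exact Hn.
Qed.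

Lemma stop_word_ok c x : 0 <= x < 1 -> word_ok g (stop_word c x).
Proof. apply address_ok. Qed.

Lemma cyl_stop_word c x : 0 <= x < 1 -> cyl f a (stop_word c x) x.
Proof. apply cyl_address. Qed.

Lemma stop_word_eq_of_cyl c x z : 0 < c -> 0 <= x < 1 ->
  cyl f a (stop_word c x) z -> stop_word c z = stop_word c x.
Proof.
  intros Hc Hx Cz. pose proof (proj1 Cz) as Hz.
  destruct (stop_gen_spec c x Hc Hx) as [Hdx Hlx].
  destruct (stop_gen_spec c z Hc Hz) as [Hdz Hlz].
  unfold stop_word in *.
  assert (Hzx : (stop_gen c z <= stop_gen c x)%nat).
  { apply Hlz. rewrite (address_eq_of_cyl _ _ x z Hx (le_n _) Cz). exact Hdx. }
  rewrite (address_eq_of_cyl _ _ x z Hx Hzx Cz) in *.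
  replace (stop_gen c x) with (stop_gen c z); [reflexivity|].
  apply Nat.le_antisymm; [exact Hzx | apply Hlx, Hdz].
Qed.

Lemma stop_word_nil c x : 0 < c -> 0 <= x < 1 -> diam (cyl f a nil) < c -> stop_word c x = nil.
Proof.
  intros Hc Hx Hnil. destruct (stop_gen_spec c x Hc Hx) as [_ Hleast].
  unfold stop_word. replace (stop_gen c x) with 0%nat; [reflexivity|].
  symmetry. apply Nat.le_0_r, Hleast. exact Hnil.
Qed.

Section Distortion.

Variables (df : R -> R) (K : R).
Hypothesis Hi : condition_i f df g a K.

Lemma condition_i_K_gt1 : 1 < K.
Proof.
  destruct Hi as (_ & _ & Hdist & _).
  assert (C0 : cyl f a nil 0) by (split; [lra | simpl; intros; lia]).
  specialize (Hdist nil (fun i H => match H with end) 0 0 C0 C0). simpl in Hdist.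
  rewrite Rabs_R1 in Hdist. lra.
Qed.

Lemma gK_ge1 : 1 <= INR g * K.
Proof.
  destruct Hset as (Hg & _). pose proof condition_i_K_gt1.
  assert (2 <= INR g) by (replace 2 with (INR 2) by (simpl; lra); apply le_INR, Hg). nra.
Qed.

(* The parent of a stopping cylinder has diameter at least [g K L], and by condition (i)
   passing to a child loses less than the factor [g K]. *)
Lemma diam_stop_word_gt L x : 0 < L -> INR g * K * L <= diam (cyl f a nil) -> 0 <= x < 1 ->
  L < diam (cyl f a (stop_word (INR g * K * L) x)).
Proof.
  destruct Hi as (_ & _ & _ & Hratio).
  intros HL Hnil Hx. pose proof gK_ge1 as HgK. set (G := INR g * K) in *.
  set (c := G * L) in *. assert (Hc : 0 < c) by (unfold c; nra).
  destruct (stop_gen_spec c x Hc Hx) as [Hsmall Hleast]. unfold stop_word in *.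
  destruct (stop_gen c x) as [|n] eqn:En; [change (address 0 x) with (@nil nat) in Hsmall; lra|].
  assert (Hparent : c <= diam (cyl f a (address n x))).
  { apply Rnot_lt_le. intro Hlt. specialize (Hleast n Hlt). lia. }
  rewrite address_S.
  specialize (Hratio _ (address_ok n x Hx) (digit x n) (proj1 (digit_spec x n Hx))).
  set (d0 := diam (cyl f a (address n x))) in *.
  set (d1 := diam (cyl f a (address n x ++ digit x n :: nil))) in *.
  assert (Hd1 : d1 = d1 / d0 * d0) by (field; lra). rewrite Hd1.
  apply Rle_lt_trans with (1 / G * d0); [|apply Rmult_lt_compat_r; lra].
  unfold c in Hparent. apply Rmult_le_reg_l with G; [lra|].
  replace (G * (1 / G * d0)) with d0 by (field; lra). exact Hparent.
Qed.

Lemma stop_cyl_reaches_right L q z : 0 < L -> 0 <= q < 1 -> 0 <= z < 1 -> q <= z ->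
  ~ cyl f a (stop_word (INR g * K * L) q) z ->
  exists t, cyl f a (stop_word (INR g * K * L) z) t /\ q + L < t.
Proof.
  intros HL Hq Hz Hqz Hout. pose proof gK_ge1.
  set (c := INR g * K * L) in *. assert (Hc : 0 < c) by (unfold c; nra).
  assert (Hnil : c <= diam (cyl f a nil)).
  { apply Rnot_lt_le. intro Hlt. apply Hout. rewrite stop_word_nil by auto. split; [exact Hz|].
    simpl; intros; lia. }
  apply diam_gt_above; [lra | apply diam_stop_word_gt; auto|].
  intros t Ct. apply Rnot_lt_le. intro Htq.
  assert (Cq : cyl f a (stop_word c z) q).
  { apply (cyl_convex _ t q z (stop_word_ok c z Hz) Ct (cyl_stop_word c z Hz)). lra. }
  apply Hout. rewrite (stop_word_eq_of_cyl c z q Hc Hz Cq). apply cyl_stop_word, Hz.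
Qed.

Lemma interval_two_stop_cyls L p : 0 < L -> exists x1 x2, 0 <= x1 < 1 /\ 0 <= x2 < 1 /\
  forall x, 0 <= x < 1 -> p <= x < p + L ->
    cyl f a (stop_word (INR g * K * L) x1) x \/ cyl f a (stop_word (INR g * K * L) x2) x.
Proof.
  intros HL. pose proof gK_ge1.
  set (c := INR g * K * L). assert (Hc : 0 < c) by (unfold c; nra).
  set (J := fun x => 0 <= x < 1 /\ p <= x < p + L).
  destruct (classic (exists x, J x)) as [[x0 Hx0]|Hempty].
  2:{ exists 0, 0. split; [lra|]. split; [lra|]. intros x Hx Hpx. exfalso. apply Hempty.
      exists x. split; assumption. }
  set (q := Rmax p 0).
  assert (Hq : J q) by (unfold J, q, Rmax in *; destruct Rle_dec; lra).
  assert (Hpq : p <= q) by apply Rmax_l.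
  assert (Hqmin : forall x, J x -> q <= x) by (intros x Hx; apply Rmax_lub; unfold J in Hx; lra).
  destruct (classic (exists y, J y /\ ~ cyl f a (stop_word c q) y)) as [[y [Hy Hyout]]|Hin].
  2:{ exists q, q. split; [apply Hq|]. split; [apply Hq|]. intros x Hx Hpx. left.
      apply NNPP. intro Hxout. apply Hin. exists x. split; [split|]; assumption. }
  exists q, y. split; [apply Hq|]. split; [apply Hy|]. intros x Hx Hpx.
  destruct (classic (cyl f a (stop_word c q) x)) as [Hxin|Hxout]; [left; exact Hxin|right].
  destruct (Rle_dec y x) as [Hyx|Hxy].
  - destruct (stop_cyl_reaches_right L q y HL (proj1 Hq) (proj1 Hy) (Hqmin y Hy) Hyout)
      as [t [Ct Ht]].
    apply (cyl_convex _ y x t (stop_word_ok c y (proj1 Hy)) (cyl_stop_word c y (proj1 Hy)) Ct).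
    lra.
  - assert (HJx : J x) by (split; assumption).
    destruct (stop_cyl_reaches_right L q x HL (proj1 Hq) Hx (Hqmin x HJx) Hxout)
      as [t [Ct Ht]].
    assert (Cy : cyl f a (stop_word c x) y).
    { apply (cyl_convex _ x y t (stop_word_ok c x Hx) (cyl_stop_word c x Hx) Ct).
      unfold J in Hy. lra. }
    rewrite (stop_word_eq_of_cyl c x y Hc Hx Cy). apply cyl_stop_word, Hx.
Qed.

Lemma pw_diam_stop_word_le s L x : 0 < s <= 1 -> 0 < L -> 0 <= x < 1 ->
  pw (diam (cyl f a (stop_word (INR g * K * L) x))) s <= INR g * K * pw L s.
Proof.
  intros Hs HL Hx. pose proof gK_ge1.
  apply Rle_trans with (pw (INR g * K * L) s); [|apply pw_scale_le; assumption].
  apply pw_le; [lra|]. left. apply stop_gen_spec; [nra | exact Hx].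
Qed.

End Distortion.

End Cylinders.

Definition stop_pair_covers f g a K (kj : Z * Z) (xs : R * R) : Prop :=
  0 <= fst xs < 1 /\ 0 <= snd xs < 1 /\
  forall x, 0 <= x < 1 -> dyad kj x ->
    cyl f a (stop_word f g a (INR g * K * powerRZ 2 (fst kj)) (fst xs)) x \/
    cyl f a (stop_word f g a (INR g * K * powerRZ 2 (fst kj)) (snd xs)) x.

Lemma exists_stop_pair_covers f df g a K :
  setting f g a -> condition_i f df g a K ->
  exists pick : Z * Z -> R * R, forall kj, stop_pair_covers f g a K kj (pick kj).
Proof.
  intros Hset Hi. apply choice. intros [k j].
  destruct (interval_two_stop_cyls f g a Hset df K Hi (powerRZ 2 k) (powerRZ 2 k * IZR j))
    as [x1 [x2 (H1 & H2 & Hc)]]; [apply powerRZ_lt; lra|].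
  exists (x1, x2). split; [exact H1|]. split; [exact H2|].
  intros x Hx Hd. apply Hc; [exact Hx|]. unfold dyad in Hd; simpl in *; lra.
Qed.

(* The two cylinders replacing the [i]-th dyadic interval get the indices [2 i] and [2 i + 1]. *)
Lemma Nout_le_dyadic_cover f df g a K s A (I : nat -> option (Z * Z)) r :
  setting f g a -> condition_i f df g a K -> 0 < s <= 1 -> (forall x, A x -> 0 <= x < 1) ->
  (forall x, A x -> exists i kj, I i = Some kj /\ dyad kj x) ->
  infinite_sum (fun i => match I i with
                         | Some kj => pw (powerRZ 2 (fst kj)) s
                         | None => 0 end) r ->
  Nout f g a s A <= 2 * (INR g * K) * r.
Proof.
  intros Hset Hi Hs HA Hcov Hsum. pose proof (gK_ge1 f g a Hset df K Hi) as HgK.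
  destruct (exists_stop_pair_covers f df g a K Hset Hi) as [pick Hpick].
  set (word i (left : bool) := match I i with
    | Some kj => Some (stop_word f g a (INR g * K * powerRZ 2 (fst kj))
                        (if left then fst (pick kj) else snd (pick kj)))
    | None => None end).
  set (C j := word (Nat.div2 j) (Nat.even j)).
  set (wt (o : option (list nat)) := match o with
    | Some w => pw (diam (cyl f a w)) s | None => 0 end).
  assert (HCeven : forall i, C (2 * i)%nat = word i true).
  { intro i. unfold C. rewrite Nat.div2_double, Nat.even_mul. reflexivity. }
  assert (HCodd : forall i, C (S (2 * i)) = word i false).
  { intro i. unfold C. rewrite Nat.div2_succ_double, Nat.even_succ, Nat.odd_mul. reflexivity. }
  assert (Hwt : forall o, 0 <= wt o) by (intros [w|]; [apply pw_nonneg | apply Rle_refl]).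
  destruct (infinite_sum_pairs_le (fun j => wt (C j))
    (fun i => match I i with Some kj => pw (powerRZ 2 (fst kj)) s | None => 0 end)
    (2 * (INR g * K)) r) as [r' [Hr' Hle]];
    [intro j; apply Hwt | intro i; destruct (I i); [apply pw_nonneg | lra] | lra | | exact Hsum |].
  { intro i. rewrite HCeven, HCodd. unfold wt, word.
    destruct (I i) as [kj|]; [|lra]. destruct (Hpick kj) as (H1 & H2 & _).
    assert (Hside : 0 < powerRZ 2 (fst kj)) by (apply powerRZ_lt; lra).
    pose proof (pw_diam_stop_word_le f g a Hset df K Hi s _ (fst (pick kj)) Hs Hside H1).
    pose proof (pw_diam_stop_word_le f g a Hset df K Hi s _ (snd (pick kj)) Hs Hside H2).
    lra. }
  apply Rle_trans with r'; [|exact Hle].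
  apply Rinf_le_mem.
  - intros r0 (C0 & _ & _ & Hs0). refine (infinite_sum_ge0 _ _ _ Hs0).
    intro n. apply (Hwt (C0 n)).
  - exists C. split; [|split; [|exact Hr']].
    + intros w j Hj. unfold C, word in Hj. destruct (I (Nat.div2 j)) as [kj|]; [|discriminate].
      injection Hj as <-. apply stop_word_ok; [exact Hset|].
      destruct (Hpick kj) as (H1 & H2 & _). destruct (Nat.even j); assumption.
    + intros x Hx. destruct (Hcov x Hx) as [i [kj [Hik Hd]]].
      destruct (Hpick kj) as (_ & _ & Hc).
      destruct (Hc x (HA x Hx) Hd) as [Hc1|Hc2].
      * exists (2 * i)%nat. rewrite HCeven. unfold word. rewrite Hik. eauto.
      * exists (S (2 * i)). rewrite HCodd. unfold word. rewrite Hik. eauto.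
Qed.

Theorem mainTheorem6 (f df : R -> R) (g : nat) (a : nat -> R) (K : R)
  (Hset : setting f g a) (Hi : condition_i f df g a K)
  (s : R) (Hs : 0 < s <= 1) (A : R -> Prop)
  (HA : forall x, A x -> 0 <= x < 1) :
  Mout s A >= / (2 * INR g * K) * Nout f g a s A.
Proof.
  pose proof (gK_ge1 f g a Hset df K Hi) as HgK.
  apply Rle_ge. unfold Mout. apply Rinf_ge_lb with (pw (powerRZ 2 0) s).
  - intros r (I & _ & Hr). refine (infinite_sum_ge0 _ _ _ Hr).
    intro n. destruct (I n); [apply pw_nonneg | lra].
  - exists (fun i => match i with O => Some (0%Z, 0%Z) | S _ => None end). split.
    + intros x Hx. exists 0%nat, (0%Z, 0%Z). split; [reflexivity|].
      unfold dyad; simpl. specialize (HA x Hx). lra.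
    + exact (infinite_sum_first _ (fun n => eq_refl)).
  - intros r (I & Hcov & Hr).
    pose proof (Nout_le_dyadic_cover f df g a K s A I r Hset Hi Hs HA Hcov Hr).
    apply Rmult_le_reg_l with (2 * INR g * K); [nra|].
    rewrite <- Rmult_assoc, Rinv_r, Rmult_1_l by nra. lra.
Qed.
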